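(* In the Data Revocation Game, let $\mathcal I=\mathcal I_1\cup\mathcal I_2\cup\{k\}$ be a partition (disjoint union, $k\notin\mathcal I_1\cup\mathcal I_2$). Put $A_k=\xi_k\ell_k+\theta_k\sum_{i\in\mathcal I_1}\ell_i^2$ and $$\hat d_k=A_k^{-1}-\sum_{j\in\mathcal I_2}d_j^{\max}-\epsilon_k .$$ For $i\in\mathcal I_1$ put $B_i=\xi_i\ell_i+\theta_i\sum_{i'\in\mathcal I_1\setminus\{i\}}\ell_{i'}^2+\theta_i\big(1-\hat d_k/d_k^{\max}\big)\ell_k^2$, and for $j\in\mathcal I_2$ put $B_j=\xi_j\ell_j+\theta_j\sum_{i\in\mathcal I_1}\ell_i^2+\theta_j\big(1-\hat d_k/d_k^{\max}\big)\ell_k^2$. Suppose (a) $\epsilon_i\ge B_i^{-1}-A_k^{-1}+\epsilon_k$ for all $i\in\mathcal I_1$; (b) $\epsilon_j\le B_j^{-1}-A_k^{-1}+\epsilon_k$ for all $j\in\mathcal I_2$; (c) $A_k^{-1}-\sum_{j\in\mathcal I_2\cup\{k\}}d_j^{\max}<\epsilon_k<A_k^{-1}-\sum_{j\in\mathcal I_2}d_j^{\max}$. Then $\hat d_k\in(0,d_k^{\max})$ and the profile $d_i^*=0$ for $i\in\mathcal I_1$, $d_k^*=\hat d_k$, $d_j^*=d_j^{\max}$ for $j\in\mathcal I_2$ is a Nash equilibrium.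
   Context: Data Revocation Game: a finite set of users $\mathcal I=\{1,\dots,I\}$, $I\ge 2$. Each user $i$ has parameters $d_i^{\max}>0$, $\epsilon_i>0$, $\xi_i>0$, $\ell_i>0$, $\theta_i\ge 0$. Each user chooses $d_i\in[0,d_i^{\max}]$. Payoff $$U_i(d_i,\boldsymbol{d_{-i}})=\ln\Big(\sum_{j\in\mathcal I}d_j+\epsilon_i\Big)-\xi_i d_i\ell_i-\theta_i d_i\sum_{j\neq i}\Big(1-\frac{d_j}{d_j^{\max}}\Big)\ell_j^2 .$$ A Nash equilibrium is a profile $(d_i^* )$ with $d_i^*\in[0,d_i^{\max}]$ and $U_i(d_i^*,\boldsymbol{d_{-i}^*})\ge U_i(d_i,\boldsymbol{d_{-i}^*})$ for all $i$ and all $d_i\in[0,d_i^{\max}]$. *)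

From HB Require Import structures.
From mathcomp Require Import all_boot all_order all_algebra.
From mathcomp Require Import all_classical all_reals all_analysis.
Set Implicit Arguments. Unset Strict Implicit. Unset Printing Implicit Defensive.
Import Order.TTheory GRing.Theory Num.Theory.
Local Open Scope ring_scope.

Definition payoff (R : realType) (T : finType)
  (dmax eps xi ell theta : T -> R) (i : T) (d : T -> R) : R :=
  ln (\sum_(j : T) d j + eps i) - xi i * d i * ell i
  - theta i * d i * (\sum_(j : T | j != i) (1 - d j / dmax j) * ell j ^+ 2).

Definition deviate (R : realType) (T : finType) (d : T -> R) (i : T) (x : R) : T -> R :=
  fun j => if j == i then x else d j.

Definition is_nash (R : realType) (T : finType)
  (dmax eps xi ell theta : T -> R) (d : T -> R) : Prop :=
  forall i : T, (0 <= d i <= dmax i) /\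
    forall x : R, 0 <= x <= dmax i ->
      payoff dmax eps xi ell theta i (deviate d i x)
      <= payoff dmax eps xi ell theta i d.

(** Each payoff [ln (S + d_i + eps_i) - d_i * c_i] is concave in the user's own
    choice [d_i], so a profile is a Nash equilibrium as soon as every user
    satisfies the first-order (KKT) condition on [[0, d_i^max]].  At the
    profile [d*] the total revoked data plus [eps_k] is [A_k^-1], so the
    marginal utility of user [k] equals its marginal cost [A_k] and [k] sits
    at an interior optimum; (a) says that a user of [I1] has marginal cost
    [B_i] above its marginal utility at [d_i = 0], and (b) that a user of [I2]
    has [B_j] below it at [d_j = d_j^max].  Condition (c) is exactly
    [0 < dhat < d_k^max]. *)
From HB Require Import structures.
From mathcomp Require Import all_boot all_order all_algebra.
From mathcomp Require Import all_classical all_reals all_analysis.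
From mathcomp Require Import ring lra.
Set Implicit Arguments. Unset Strict Implicit. Unset Printing Implicit Defensive.
Import Order.TTheory GRing.Theory Num.Theory.
Local Open Scope ring_scope.

(* Concavity of [ln] in the form [ln y - ln y0 <= y / y0 - 1]. *)
Lemma ln_sub_linear_le (R : realType) (a c x x0 : R) :
  0 < a + x -> 0 < a + x0 -> (x - x0) * ((a + x0)^-1 - c) <= 0 ->
  ln (a + x) - x * c <= ln (a + x0) - x0 * c.
Proof.
move=> hx hx0 hfoc.
have hratio : 0 < (a + x) / (a + x0) by apply: divr_gt0.
have hln : ln (a + x) - ln (a + x0) <= (a + x) / (a + x0) - 1.
  by rewrite -ln_div ?posrE // -[X in ln X](subrK 1) addrC le_ln1Dx //; lra.
have hslope : (a + x) / (a + x0) - 1 = (x - x0) * (a + x0)^-1.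
  by field; rewrite gt_eqF.
lra.
Qed.

Definition marginal_cost (R : realType) (T : finType)
  (dmax xi ell theta d : T -> R) (i : T) : R :=
  xi i * ell i + theta i * \sum_(j | j != i) (1 - d j / dmax j) * ell j ^+ 2.

Lemma deviate_id (R : realType) (T : finType) (d : T -> R) i :
  deviate d i (d i) = d.
Proof. by apply: boolp.funext => j; rewrite /deviate; case: eqP => [->|]. Qed.

Lemma payoff_deviate (R : realType) (T : finType)
  (dmax eps xi ell theta d : T -> R) i x :
  payoff dmax eps xi ell theta i (deviate d i x) =
  ln (\sum_(j | j != i) d j + x + eps i)
  - x * marginal_cost dmax xi ell theta d i.
Proof.
rewrite /payoff /marginal_cost /deviate eqxx (bigD1 i) //= eqxx.
have eq_others (F : T -> R -> R) :
    \sum_(j | j != i) F j (if j == i then x else d j) = \sum_(j | j != i) F j (d j).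
  by apply: eq_bigr => j /negbTE ->.
rewrite (eq_others (fun _ y => y))
        (eq_others (fun j y => (1 - y / dmax j) * ell j ^+ 2)) [x + _]addrC.
ring.
Qed.

Lemma is_nash_first_order (R : realType) (T : finType)
  (dmax eps xi ell theta d : T -> R) :
  (forall i, 0 < eps i) -> (forall i, 0 <= d i <= dmax i) ->
  (forall i x, 0 <= x <= dmax i ->
     (x - d i) * ((\sum_j d j + eps i)^-1
                  - marginal_cost dmax xi ell theta d i) <= 0) ->
  is_nash dmax eps xi ell theta d.
Proof.
move=> heps hd hfoc i; split=> // x hx.
have hothers : 0 <= \sum_(j | j != i) d j.
  by apply: sumr_ge0 => j _; case/andP: (hd j).
have htotal : \sum_j d j = \sum_(j | j != i) d j + d i.
  by rewrite (bigD1 i) //= addrC.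
have heps_i := heps i; case/andP: (hd i) => hdi0 _; have /andP[hx0 _] := hx.
rewrite -[in X in _ <= X](deviate_id d i) !payoff_deviate.
have shift y : \sum_(j | j != i) d j + y + eps i
             = (\sum_(j | j != i) d j + eps i) + y by ring.
rewrite !shift; apply: ln_sub_linear_le; [lra | lra |].
by rewrite -shift -htotal; exact: hfoc.
Qed.

Section ThresholdProfile.
Variables (R : realType) (T : finType) (dmax eps xi ell theta : T -> R).
Hypotheses (hdmax : forall i, 0 < dmax i) (heps : forall i, 0 < eps i)
  (hxi : forall i, 0 < xi i) (hell : forall i, 0 < ell i)
  (htheta : forall i, 0 <= theta i).
Variables (I1 I2 : {set T}) (k : T).
Hypotheses (hdisj : [disjoint I1 & I2]) (hk1 : k \notin I1) (hk2 : k \notin I2)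
  (hcover : I1 :|: I2 :|: [set k] = [set: T]).

Definition Ak := xi k * ell k + theta k * (\sum_(i in I1) ell i ^+ 2).
Definition dhat := Ak^-1 - (\sum_(j in I2) dmax j) - eps k.
Definition B1 i := xi i * ell i
  + theta i * (\sum_(i' in I1 | i' != i) ell i' ^+ 2)
  + theta i * (1 - dhat / dmax k) * ell k ^+ 2.
Definition B2 j := xi j * ell j
  + theta j * (\sum_(i in I1) ell i ^+ 2)
  + theta j * (1 - dhat / dmax k) * ell k ^+ 2.
Definition dstar j := if j \in I1 then 0 else if j == k then dhat else dmax j.

Hypothesis hB1 : forall i, i \in I1 -> eps i >= (B1 i)^-1 - Ak^-1 + eps k.
Hypothesis hB2 : forall j, j \in I2 -> eps j <= (B2 j)^-1 - Ak^-1 + eps k.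
Hypothesis hlow : Ak^-1 - (\sum_(j in I2 :|: [set k]) dmax j) < eps k.
Hypothesis hup : eps k < Ak^-1 - (\sum_(j in I2) dmax j).

Lemma partitionP i : [\/ i \in I1, i \in I2 | i = k].
Proof.
have : i \in I1 :|: I2 :|: [set k] by rewrite hcover inE.
by rewrite !inE => /orP[/orP[]|/eqP]; [apply: Or31 | apply: Or32 | apply: Or33].
Qed.

Lemma big_partition (F : T -> R) :
  \sum_j F j = \sum_(j in I1) F j + \sum_(j in I2) F j + F k.
Proof.
have -> : \sum_j F j = \sum_(j in [set: T]) F j.
  by apply: eq_bigl => j; rewrite inE.
rewrite -hcover finset.setUC big_setU1 ?inE ?negb_or ?hk1 //= addrC -bigU //.
by congr (_ + _); apply: eq_bigl => j; rewrite !inE.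
Qed.

Lemma dstar_I1 i : i \in I1 -> dstar i = 0.
Proof. by rewrite /dstar => ->. Qed.

Lemma dstar_I2 j : j \in I2 -> dstar j = dmax j.
Proof.
move=> hj; rewrite /dstar (disjointFl hdisj hj).
by case: eqP => // ejk; move: hk2; rewrite -ejk hj.
Qed.

Lemma dstar_k : dstar k = dhat.
Proof. by rewrite /dstar (negbTE hk1) eqxx. Qed.

Lemma sum_I2_dmax_ge0 : 0 <= \sum_(j in I2) dmax j.
Proof. by apply: sumr_ge0 => j _; apply: ltW. Qed.

Lemma dhat_bounds : 0 < dhat < dmax k.
Proof.
have hsum : \sum_(j in I2 :|: [set k]) dmax j = \sum_(j in I2) dmax j + dmax k.
  by rewrite finset.setUC big_setU1 //= addrC.
move: hup hlow; rewrite hsum /dhat => *; apply/andP; split; lra.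
Qed.

Lemma dstar_bounds i : 0 <= dstar i <= dmax i.
Proof.
have hdk := dhat_bounds; have hdi := ltW (hdmax i).
case: (partitionP i) => [hi|hi|->].
- by rewrite dstar_I1 // lexx hdi.
- by rewrite dstar_I2 // lexx hdi.
- by rewrite dstar_k; case/andP: hdk => *; apply/andP; split; apply: ltW.
Qed.

Lemma sum_dstar : \sum_j dstar j = Ak^-1 - eps k.
Proof.
rewrite big_partition dstar_k big1 => [|i]; last exact: dstar_I1.
by rewrite (eq_bigr _ dstar_I2) /dhat; ring.
Qed.

Lemma revocation_weights :
  \sum_j (1 - dstar j / dmax j) * ell j ^+ 2
  = \sum_(i in I1) ell i ^+ 2 + (1 - dhat / dmax k) * ell k ^+ 2.
Proof.
rewrite big_partition dstar_k [X in _ + X + _]big1 => [|j hj]; last first.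
  by rewrite dstar_I2 // divff ?gt_eqF // subrr mul0r.
rewrite addr0; congr (_ + _); apply: eq_bigr => i hi.
by rewrite dstar_I1 // mul0r subr0 mul1r.
Qed.

Lemma marginal_cost_dstar i :
  marginal_cost dmax xi ell theta dstar i
  = xi i * ell i + theta i * (\sum_(i in I1) ell i ^+ 2
      + (1 - dhat / dmax k) * ell k ^+ 2
      - (1 - dstar i / dmax i) * ell i ^+ 2).
Proof.
rewrite /marginal_cost -revocation_weights [X in _ = _ + _ * (X - _)](bigD1 i) //=.
ring.
Qed.

Lemma marginal_cost_I1 i :
  i \in I1 -> marginal_cost dmax xi ell theta dstar i = B1 i.
Proof.
move=> hi; rewrite marginal_cost_dstar dstar_I1 // /B1 (bigD1 i hi) /=.
by rewrite mul0r subr0 mul1r; ring.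
Qed.

Lemma marginal_cost_I2 j :
  j \in I2 -> marginal_cost dmax xi ell theta dstar j = B2 j.
Proof.
move=> hj; rewrite marginal_cost_dstar dstar_I2 // divff ?gt_eqF //.
by rewrite subrr mul0r subr0 /B2; ring.
Qed.

Lemma marginal_cost_k : marginal_cost dmax xi ell theta dstar k = Ak.
Proof. by rewrite marginal_cost_dstar dstar_k /Ak; ring. Qed.

Lemma threshold_cost_gt0 i (S : R) : 0 <= S ->
  0 < xi i * ell i + theta i * S + theta i * (1 - dhat / dmax k) * ell k ^+ 2.
Proof.
move=> hS; have /andP[_ hdk] := dhat_bounds.
have hw : 0 <= 1 - dhat / dmax k by rewrite subr_ge0 ler_pdivrMr // mul1r ltW.
have h1 := mulr_gt0 (hxi i) (hell i); have h2 := mulr_ge0 (htheta i) hS.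
have h3 := mulr_ge0 (mulr_ge0 (htheta i) hw) (sqr_ge0 (ell k)).
lra.
Qed.

Lemma dstar_first_order i x : 0 <= x <= dmax i ->
  (x - dstar i) * ((\sum_j dstar j + eps i)^-1
                 - marginal_cost dmax xi ell theta dstar i) <= 0.
Proof.
case/andP=> hx0 hx1; rewrite sum_dstar.
case: (partitionP i) => [hi|hi|->].
- have hB : 0 < B1 i.
    by apply: threshold_cost_gt0; apply: sumr_ge0 => j _; apply: sqr_ge0.
  have hBi : 0 < (B1 i)^-1 by rewrite invr_gt0.
  have := hB1 hi => ha.
  rewrite dstar_I1 // marginal_cost_I1 // subr0.
  apply: mulr_ge0_le0 => //; rewrite subr_le0 -(invrK (B1 i)).
  by rewrite lef_pV2 ?posrE //; lra.
- have hB : 0 < B2 i.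
    by apply: threshold_cost_gt0; apply: sumr_ge0 => j _; apply: sqr_ge0.
  have := hB2 hi => hb; have /andP[hdk _] := dhat_bounds.
  have hI2 := sum_I2_dmax_ge0; have hepsi := heps i.
  have hutil : 0 < Ak^-1 - eps k + eps i by move: hdk; rewrite /dhat; lra.
  rewrite dstar_I2 // marginal_cost_I2 //.
  apply: mulr_le0_ge0; first lra.
  by rewrite subr_ge0 -(invrK (B2 i)) lef_pV2 ?posrE ?invr_gt0 //; lra.
- by rewrite marginal_cost_k subrK invrK subrr mulr0.
Qed.

End ThresholdProfile.

Theorem proposition3 (R : realType) (T : finType)
  (dmax eps xi ell theta : T -> R)
  (hI : (2 <= #|T|)%N)
  (hdmax : forall i, 0 < dmax i) (heps : forall i, 0 < eps i)
  (hxi : forall i, 0 < xi i) (hell : forall i, 0 < ell i)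
  (htheta : forall i, 0 <= theta i)
  (I1 I2 : {set T}) (k : T)
  (hdisj : [disjoint I1 & I2]) (hk1 : k \notin I1) (hk2 : k \notin I2)
  (hcover : I1 :|: I2 :|: [set k] = [set: T]) :
  let A_k := xi k * ell k + theta k * (\sum_(i in I1) ell i ^+ 2) in
  let dhat := A_k^-1 - (\sum_(j in I2) dmax j) - eps k in
  let B1 := fun i => xi i * ell i
              + theta i * (\sum_(i' in I1 | i' != i) ell i' ^+ 2)
              + theta i * (1 - dhat / dmax k) * ell k ^+ 2 in
  let B2 := fun j => xi j * ell j
              + theta j * (\sum_(i in I1) ell i ^+ 2)
              + theta j * (1 - dhat / dmax k) * ell k ^+ 2 in
  (forall i, i \in I1 -> eps i >= (B1 i)^-1 - A_k^-1 + eps k) ->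
  (forall j, j \in I2 -> eps j <= (B2 j)^-1 - A_k^-1 + eps k) ->
  A_k^-1 - (\sum_(j in I2 :|: [set k]) dmax j) < eps k ->
  eps k < A_k^-1 - (\sum_(j in I2) dmax j) ->
  (0 < dhat < dmax k) /\
  is_nash dmax eps xi ell theta
    (fun j => if j \in I1 then 0 else if j == k then dhat else dmax j).
Proof.
move=> A_k dhat B1 B2 ha hb hlow hup; split; first exact: dhat_bounds.
apply: is_nash_first_order => // [i|i x]; first exact: dstar_bounds.
exact: dstar_first_order.
Qed.
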